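(* Consider the selection task with rank queries. For every $n\ge1$, $k\ge1$ and $p\in[0,1]$, there is a deterministic algorithm that runs in $k$ rounds on a uniformly random input of length $n$, succeeds with probability at least $p$, and issues at most $np\bigl(1-\frac{k-1}{2k}p\bigr)+1$ queries in expectation.
   Context: Selection with rank queries: there is a vector $\vec{x}=(x_1,\ldots,x_n)$ whose ranks form an unknown permutation of $\{1,\ldots,n\}$; a rank $r\in\{1,\ldots,n\}$ is given and the goal is to output the index $i$ with $\mathrm{rank}(x_i)=r$. Queries have the form ''How is $\mathrm{rank}(x_j)$ compared to $m$?'', with answer ''$<$'', ''$=$'' or ''$>$''. An algorithm runs in $k$ rounds if in each of $k$ rounds it submits a set of queries chosen depending only on answers of earlier rounds, then receives all answers. ''Uniformly random input'' means the rank permutation is uniformly random; probabilities and expectations are over it. *)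

From HB Require Import structures.
From mathcomp Require Import all_boot all_order all_algebra all_fingroup.
From mathcomp Require Import reals.
Set Implicit Arguments. Unset Strict Implicit. Unset Printing Implicit Defensive.
Import Order.TTheory GRing.Theory Num.Theory.

(* Indices and ranks are 0-based: an input of length n is a permutation
   s : 'S_n, where s i is the rank of x_i (rank r of the paper = r-1 here). *)

(* A rank query "How is rank(x_j) compared to m?" is the pair (j, m). *)
Definition query (n : nat) : Type := ('I_n * 'I_n)%type.

Definition answer (n : nat) (s : 'S_n) (q : query n) : comparison :=
  Nat.compare (s q.1) q.2.

(* The transcript of the rounds performed so far: for each round, the list of
   queries submitted in that round together with their answers. *)
Definition history (n : nat) : Type := seq (seq (query n * comparison)).

Record algorithm (n : nat) : Type := Algorithm {
  next_round : history n -> seq (query n);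
  output : history n -> 'I_n
}.

Fixpoint run (n : nat) (A : algorithm n) (s : 'S_n) (k : nat) : history n :=
  match k with
  | 0 => [::]
  | k'.+1 =>
      let h := run A s k' in
      rcons h [seq (q, answer s q) | q <- next_round A h]
  end.

Definition num_queries (n : nat) (A : algorithm n) (s : 'S_n) (k : nat) : nat :=
  sumn [seq size rd | rd <- run A s k].

Definition succeeds (n : nat) (A : algorithm n) (k : nat) (r : 'I_n) (s : 'S_n)
  : bool := s (output A (run A s k)) == r.

Local Open Scope ring_scope.

Definition success_prob (R : realType) (n : nat) (A : algorithm n) (k : nat)
  (r : 'I_n) : R :=
  #|[set s : 'S_n | succeeds A k r s]|%:R / (n`!)%:R.

Definition expected_queries (R : realType) (n : nat) (A : algorithm n) (k : nat)
  : R :=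
  (\sum_(s : 'S_n) (num_queries A s k)%:R) / (n`!)%:R.

From HB Require Import structures.
From mathcomp Require Import all_boot all_order all_algebra all_fingroup.
From mathcomp Require Import reals.
From mathcomp Require Import zify ring lra.
From Stdlib Require Import PeanoNat.
Set Implicit Arguments. Unset Strict Implicit. Unset Printing Implicit Defensive.
Import Order.TTheory GRing.Theory Num.Theory.

(* Fix m with m <= n p <= m + 1 and batches of size q = floor(m/k) + 1.  In
   round t the algorithm asks, for every position j < m with floor(j/q) = t,
   whether x_j has rank r, and it stops after the first round with a hit; if
   there is none it outputs position m.  So it succeeds whenever rank r sits
   at one of the positions 0..m, with probability (m+1)/n >= p.  When the
   target is at position J, the queries saved are those to positions j < m in
   a batch after J's; summed over J these are half of the ordered pairs below
   m lying in different batches, at least (m^2 - q m)/2 of them.  As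
   q k <= m + k, the expected cost is at most (2knm - (k-1)m^2 + km)/(2kn),
   and the claim follows because x |-> 2knx - (k-1)x^2 increases on [0, n]
   and m <= n p. *)

Lemma sum_perm_preimage n (r : 'I_n) (G : 'I_n -> nat) :
  n * \sum_(s : 'S_n) G ((s^-1)%g r) = n`! * \sum_(j < n) G j.
Proof.
pose c := \sum_(s : 'S_n) (s r == r : nat).
have fiber_card j : \sum_(s : 'S_n) (s j == r : nat) = c.
  rewrite (reindex_inj (mulgI (tperm r j))).
  by apply: eq_bigr => s _; rewrite permM tpermR.
have preimage_sum (F : 'I_n -> nat) (s : 'S_n) :
    F ((s^-1)%g r) = \sum_(j < n) (s j == r) * F j.
  rewrite (bigD1 ((s^-1)%g r)) //= permKV eqxx mul1n big1 ?addn0 // => j.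
  by rewrite (can2_eq (permK s) (permKV s)) => /negbTE ->.
have sum_swap (F : 'I_n -> nat) :
    \sum_(s : 'S_n) F ((s^-1)%g r) = c * \sum_(j < n) F j.
  rewrite (eq_bigr _ (fun s _ => preimage_sum F s)) exchange_big big_distrr /=.
  by apply: eq_bigr => j _; rewrite -big_distrl /= fiber_card.
have fact_eq : n`! = c * n.
  by have := sum_swap (fun=> 1%N); rewrite !sum1_card card_ord card_Sn.
by rewrite sum_swap fact_eq mulnA [n * c]mulnC.
Qed.

Definition is_Eq (c : comparison) : bool := if c is Eq then true else false.

Lemma is_Eq_compare a b : is_Eq (Nat.compare a b) = (a == b).
Proof.
by case: Nat.compare_spec => [->|h|h]; rewrite ?eqxx //; apply/esym/negbTE/eqP; lia.
Qed.

Lemma sum_ord_lt n m : \sum_(j < n) (j < m : nat) = minn n m.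
Proof.
elim: n => [|n IH]; first by rewrite big_ord0 min0n.
by rewrite big_ord_recr /= IH; case: ltnP => /=; lia.
Qed.

Lemma count_divn_eq_le n c q : 0 < q -> \sum_(j < n) (j %/ q == c : nat) <= q.
Proof.
move=> q_gt0.
have -> : \sum_(j < n) (j %/ q == c : nat) = #|[pred j : 'I_n | j %/ q == c]|.
  by rewrite -sum1_card [RHS]big_mkcond; apply: eq_bigr => j _; rewrite inE; case: eqP.
rewrite -[q in _ <= q]card_ord.
apply: (leq_card_in (fun j : 'I_n => Ordinal (ltn_pmod j q_gt0))) => x y.
rewrite !inE => /eqP x_c /eqP y_c [xy_mod]; apply: val_inj.
by rewrite /= (divn_eq x q) (divn_eq y q) x_c y_c xy_mod.
Qed.

Section BatchedScan.
Variables (n m q : nat) (r d : 'I_n).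

Definition found (h : history n) : bool :=
  has (fun qa : query n * comparison => is_Eq qa.2) (flatten h).

Definition batch (t : nat) : seq 'I_n :=
  [seq j : 'I_n <- enum 'I_n | (j < m) && (j %/ q == t)].

Definition batched_scan : algorithm n := Algorithm
  (fun h => if found h then [::] else [seq (j, r) | j <- batch (size h)])
  (fun h => head d [seq qa.1.1 | qa <- flatten h & is_Eq qa.2]).

Definition scan_cost (J : 'I_n) : nat :=
  \sum_(j < n) ((j < m) && ~~ ((J < m) && (J %/ q < j %/ q))).

Lemma size_batch t : size (batch t) = \sum_(j < n) ((j < m) && (j %/ q == t)).
Proof.
rewrite size_filter -sum1_count big_mkcond big_enum /=.
by apply: eq_bigr => j _; case: ifP.
Qed.

Variable k : nat.
Hypothesis batches_fit : forall j, j < m -> j %/ q < k.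

Section Run.
Variable s : 'S_n.
Let J := (s^-1)%g r.

Lemma is_Eq_answer j : is_Eq (answer s (j, r)) = (j == J).
Proof. by rewrite /answer is_Eq_compare -(can2_eq (permK s) (permKV s)). Qed.

Lemma size_run_scan i : size (run batched_scan s i) = i.
Proof. by elim: i => //= i IH; rewrite size_rcons IH. Qed.

Lemma run_scan_Eq_target i :
  all (fun qa : query n * comparison => is_Eq qa.2 ==> (qa.1.1 == J))
      (flatten (run batched_scan s i)).
Proof.
elim: i => //= i IH; rewrite -cats1 flatten_cat all_cat IH /= cats0.
case: ifP => _ //=; rewrite -map_comp all_map.
by apply/allP => j _ /=; rewrite is_Eq_answer implybb.
Qed.

Lemma found_run_scan i : found (run batched_scan s i) = (J < m) && (J %/ q < i).
Proof.
elim: i => [|i IH]; first by rewrite andbF.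
rewrite /found /= -cats1 flatten_cat has_cat /= cats0 -/(found _) IH size_run_scan.
case: ifP => [/andP[-> lt_Ji] | not_found]; first by rewrite ltnW.
rewrite -map_comp has_map /=.
rewrite (@eq_has _ _ (pred1 J)) => [|j]; last by rewrite /= is_Eq_answer.
rewrite has_pred1 mem_filter mem_enum andbT.
by case: (J < m) not_found => //= lt_Ji; rewrite ltnS leq_eqVlt lt_Ji orbF.
Qed.

Lemma num_queries_run_scan i : num_queries batched_scan s i =
  \sum_(j < n) ((j < m) && (j %/ q < i) && ~~ ((J < m) && (J %/ q < j %/ q))).
Proof.
elim: i => [|i IH]; first by rewrite big1 // => j _; rewrite ltn0 andbF.
rewrite /num_queries /= map_rcons sumn_rcons -/(num_queries _ _ _) IH.
rewrite found_run_scan size_run_scan.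
case: ifP => [/andP[J_lt_m lt_Ji]|not_found].
  rewrite addn0; apply: eq_bigr => j _.
  have [h|h|->] := ltngtP (j %/ q) i.
  - by rewrite ltnS (ltnW h).
  - by rewrite ltnS (leqNgt (j %/ q)) h andbF.
  - by rewrite ltnSn J_lt_m lt_Ji !andbF.
rewrite !size_map size_batch -big_split /=; apply: eq_bigr => j _.
have [h|h|->] := ltngtP (j %/ q) i.
- by rewrite andbF /= addn0 ltnS (ltnW h).
- by rewrite ltnS (leqNgt (j %/ q)) h !andbF.
- by rewrite ltnSn not_found andbF !andbT.
Qed.

Lemma succeeds_scan : val d = m -> J <= m -> succeeds batched_scan k r s.
Proof.
move=> d_eq_m J_le_m; rewrite /succeeds /=.
set hits := [seq qa.1.1 | qa <- _ & _].
have hits_J : all (pred1 J) hits.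
  by rewrite all_map all_filter; exact: run_scan_Eq_target.
have hits_nil : (hits == [::]) = ~~ found (run batched_scan s k).
  by rewrite -size_eq0 size_map size_filter /found has_count lt0n negbK.
case: (ltnP J m) => [J_lt_m | m_le_J].
  have : found (run batched_scan s k) by rewrite found_run_scan J_lt_m batches_fit.
  rewrite -[found _]negbK -hits_nil.
  by case: hits hits_J hits_nil => //= x l /andP[/eqP -> _] _ _; rewrite /J permKV.
have J_eq_d : J = d.
  by apply: val_inj; rewrite d_eq_m; apply/eqP; rewrite eqn_leq J_le_m.
have : ~~ found (run batched_scan s k) by rewrite found_run_scan ltnNge m_le_J.
by rewrite -hits_nil => /eqP ->; rewrite /= -J_eq_d /J permKV.
Qed.

Lemma num_queries_scan : num_queries batched_scan s k = scan_cost J.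
Proof.
rewrite num_queries_run_scan; apply: eq_bigr => j _.
by case: (ltnP j m) => //= /batches_fit ->.
Qed.

End Run.

Lemma sum_scan_cost_bound : m <= n -> 0 < q ->
  2 * \sum_(J < n) scan_cost J + m * m <= 2 * n * m + q * m.
Proof.
move=> m_le_n q_gt0.
have sum_lt_m : \sum_(j < n) (j < m : nat) = m.
  by rewrite sum_ord_lt; apply/minn_idPr.
(* With the target at J, the query to j < m is saved iff [later J j]. *)
pose later J j : nat := [&& J < m, j < m & J %/ q < j %/ q].
pose same J j : nat := [&& J < m, j < m & J %/ q == j %/ q].
have cost_later :
    \sum_(J < n) scan_cost J + \sum_(J < n) \sum_(j < n) later J j = n * m.
  rewrite -big_split /= -[n in n * m]card_ord -sum_nat_const; apply: eq_bigr => J _.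
  rewrite -big_split /= -[RHS]sum_lt_m; apply: eq_bigr => j _.
  by rewrite /later; case: (j < m); case: (J < m); case: (_ < _).
have pairs_lt_m : 2 * \sum_(J < n) \sum_(j < n) later J j
                   + \sum_(J < n) \sum_(j < n) same J j = m * m.
  rewrite mul2n -addnn {2}exchange_big -!big_split /=.
  rewrite -[in RHS]sum_lt_m big_distrlr /=; apply: eq_bigr => J _.
  rewrite -!big_split /=; apply: eq_bigr => j _.
  by rewrite /later /same; case: (ltngtP (J %/ q) (j %/ q)); case: (J < m); case: (j < m).
have same_le : \sum_(J < n) \sum_(j < n) same J j <= q * m.
  rewrite mulnC -sum_lt_m big_distrl /=; apply: leq_sum => J _; rewrite /same.
  case: (J < m) => /=; last by rewrite big1.
  rewrite mul1n; apply: leq_trans (count_divn_eq_le n (J %/ q) q_gt0).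
  by apply: leq_sum => j _; rewrite eq_sym; case: (j < m); case: (_ == _).
lia.
Qed.

End BatchedScan.

Lemma ltn_divn_rounds m k j : 0 < k -> j < m -> j %/ (m %/ k).+1 < k.
Proof.
move=> k_gt0 j_lt_m; rewrite ltn_divLR //.
by have := ltn_pmod m k_gt0; have := divn_eq m k; nia.
Qed.

Lemma sum_scan_cost_rounds n m k : 0 < k -> m <= n ->
  2 * k * \sum_(J < n) scan_cost m (m %/ k).+1 J + k * (m * m)
    <= 2 * k * n * m + k * m + m * m.
Proof.
move=> k_gt0 m_le_n.
have := sum_scan_cost_bound m_le_n (ltn0Sn (m %/ k)).
have : (m %/ k).+1 * k <= m + k by rewrite mulSn addnC leq_add2r leq_divM.
nia.
Qed.

Local Open Scope ring_scope.

Lemma mean_perm_preimage (R : realFieldType) n (r : 'I_n) (G : 'I_n -> nat) :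
  (\sum_(s : 'S_n) G ((s^-1)%g r))%:R / n`!%:R
  = (\sum_(j < n) G j)%:R / n%:R :> R.
Proof.
have n_gt0 : (0 < n)%N by apply: leq_ltn_trans (ltn_ord r).
apply/eqP; rewrite eqr_div ?pnatr_eq0 -?lt0n ?fact_gt0 // -!natrM eqr_nat.
by rewrite mulnC sum_perm_preimage mulnC.
Qed.

Section BatchedScanAverage.
Variables (R : realType) (n m q k : nat) (r d : 'I_n).
Hypothesis batches_fit : forall j, (j < m)%N -> (j %/ q < k)%N.

Lemma success_prob_scan : val d = m ->
  m.+1%:R / n%:R <= success_prob R (batched_scan m q r d) k r.
Proof.
move=> d_eq_m.
have m_lt_n : (m < n)%N by rewrite -d_eq_m ltn_ord.
have hit_count : (\sum_(s : 'S_n) ((s^-1)%g r < m.+1 : nat)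
                  <= #|[set s : 'S_n | succeeds (batched_scan m q r d) k r s]|)%N.
  rewrite -sum1_card [X in (_ <= X)%N]big_mkcond /=; apply: leq_sum => s _.
  by rewrite inE; case: ltnP => //= J_le_m; rewrite (succeeds_scan batches_fit).
rewrite -[m.+1 in X in X <= _](minn_idPr m_lt_n) -sum_ord_lt.
rewrite -(mean_perm_preimage R r (fun j => (j < m.+1)%N)).
by apply: ler_wpM2r; rewrite ?invr_ge0 // ler_nat hit_count.
Qed.

Lemma expected_queries_scan :
  expected_queries R (batched_scan m q r d) k
  = (\sum_(J < n) scan_cost m q J)%:R / n%:R.
Proof.
rewrite /expected_queries -(mean_perm_preimage R r (scan_cost m q)) -natr_sum.
by under eq_bigr => s _ do rewrite (num_queries_scan r d batches_fit).
Qed.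

End BatchedScanAverage.

Lemma quadratic_cost_bound (R : realFieldType) (K N M S p : R) :
  1 <= K -> 0 <= M -> M <= N * p -> 0 <= p <= 1 -> 0 < N ->
  2 * K * S + K * (M * M) <= 2 * K * N * M + K * M + M * M ->
  S / N <= N * p * (1 - (K - 1) / (2 * K) * p) + 1.
Proof.
move=> K_ge1 M_ge0 M_le_Np /andP[p_ge0 p_le1] N_gt0 cost_le.
rewrite ler_pdivrMr //.
have K_gt0 : 0 < K by lra.
rewrite -(ler_pM2l (_ : 0 < 2 * K)); last lra.
have -> : 2 * K * ((N * p * (1 - (K - 1) / (2 * K) * p) + 1) * N) =
    2 * K * N * (N * p) - (K - 1) * (N * p) ^+ 2 + 2 * K * N.
  by field; lra.
have Np_le_N : N * p <= N by rewrite -[X in _ <= X]mulr1 ler_wpM2l //; lra.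
have increasing : 2 * K * N * M - (K - 1) * M ^+ 2
                  <= 2 * K * N * (N * p) - (K - 1) * (N * p) ^+ 2.
  (* (K - 1) (N p + M) <= 2 (K - 1) N <= 2 K N *)
  have : 0 <= (N * p - M) * (2 * K * N - (K - 1) * (N * p + M)).
    by apply: mulr_ge0; nra.
  nra.
nra.
Qed.

Lemma nat_bracket (R : realType) (x : R) N : 0 <= x <= N.+1%:R ->
  exists m, (m <= N)%N /\ m%:R <= x <= m.+1%:R.
Proof.
elim: N => [|N IH] /andP[x_ge0 x_le]; first by exists 0%N; rewrite x_ge0.
have [x_le_N | N_lt_x] := lerP x N.+1%:R.
  have [m [m_le x_in]] := IH (introT andP (conj x_ge0 x_le_N)).
  by exists m; rewrite leqW.
by exists N.+1; rewrite leqnn x_le ltW.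
Qed.

Theorem proposition8 (R : realType) (n k : nat) (p : R) (r : 'I_n) :
  (1 <= n)%N -> (1 <= k)%N -> 0 <= p <= 1 ->
  exists A : algorithm n,
    p <= success_prob R A k r /\
    expected_queries R A k
      <= n%:R * p * (1 - (k%:R - 1) / (2 * k%:R) * p) + 1.
Proof.
move=> n_gt0 k_gt0 /andP[p_ge0 p_le1].
have [m [m_le /andP[m_le_np np_le_m1]]] :
    exists m, (m <= n.-1)%N /\ m%:R <= n%:R * p <= m.+1%:R.
  apply: nat_bracket; rewrite prednK // mulr_ge0 //= -[X in _ <= X]mulr1 ler_wpM2l //.
have m_lt_n : (m < n)%N by rewrite -(prednK n_gt0) ltnS.
have batches_fit j : (j < m)%N -> (j %/ (m %/ k).+1 < k)%N.
  exact: ltn_divn_rounds.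
exists (batched_scan m (m %/ k).+1 r (Ordinal m_lt_n)); split.
  apply: le_trans _ (success_prob_scan R r (d := Ordinal m_lt_n) batches_fit erefl).
  by rewrite ler_pdivlMr ?ltr0n // mulrC.
rewrite (expected_queries_scan R _ _ batches_fit).
apply: (quadratic_cost_bound (M := m%:R)); rewrite ?ler1n ?ltr0n ?p_ge0 //.
by rewrite -!natrM -!natrD ler_nat sum_scan_cost_rounds // ltnW.
Qed.
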